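(* Consider the network formation game with validators $V$, services $S$ (nonempty), stakes $\sigma$, reward pools $R$ and target restaking degree $d^*>0$. Assume that for every $s\in S$, $R(s)>0$ and $d^*\cdot\frac{R(s)}{\sum_{s'\in S}R(s')}\le1$. Then the allocation profile $$w^*(v,s)=d^*\cdot\frac{R(s)}{\sum_{s'\in S}R(s')}\cdot\sigma(v)\qquad(v\in V,\ s\in S)$$ is a Nash equilibrium of the game, and under it every validator has restaking degree exactly $d^*$.
   Context: Network formation game: $V$ is a finite nonempty set of validators with stakes $\sigma:V\to\mathbb{R}_{>0}$, $S$ is a finite set of services with reward pools $R:S\to\mathbb{R}_{>0}$, and $d^*>0$ is a target restaking degree. Each validator $v$ chooses allocations $w(v,s)\in[0,\sigma(v)]$ for all $s\in S$; the profile is $w:V\times S\to\mathbb{R}_{\ge0}$. The restaking degree of $v$ is $\deg(v)=\sum_{s\in S}w(v,s)/\sigma(v)$. The utility of $v$ is $$u_v(w)=\begin{cases}\sum_{s\in S}\frac{w(v,s)}{\sum_{v'\in V}w(v',s)}R(s)&\text{if }\deg(v)\le d^*,\\0&\text{otherwise,}\end{cases}$$ where a term with $w(v,s)=0$ is taken to be $0$. A Nash equilibrium is a profile in which no single validator can strictly increase its utility by unilaterally changing its own allocations. *)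

From mathcomp Require Import all_boot all_order all_algebra.
Set Implicit Arguments. Unset Strict Implicit. Unset Printing Implicit Defensive.
Import Order.TTheory GRing.Theory Num.Theory.
Local Open Scope ring_scope.

Section Game.
Variables (R : realFieldType) (V S : finType).
Variables (sigma : V -> R) (Rw : S -> R) (dstar : R).

Notation profile := (V -> S -> R).

Definition feasible_row (v : V) (x : S -> R) : Prop :=
  forall s, 0 <= x s <= sigma v.

Definition feasible (w : profile) : Prop := forall v, feasible_row v (w v).

Definition restaking_degree (w : profile) (v : V) : R :=
  (\sum_(s : S) w v s) / sigma v.

Definition utility (w : profile) (v : V) : R :=
  if restaking_degree w v <= dstar then
    \sum_(s : S) (if w v s == 0 then 0
                  else w v s / (\sum_(v' : V) w v' s) * Rw s)
  else 0.

Definition deviate (w : profile) (v : V) (x : S -> R) : profile :=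
  fun v' s => if v' == v then x s else w v' s.

Definition nash_equilibrium (w : profile) : Prop :=
  feasible w /\
  forall v (x : S -> R), feasible_row v x ->
    ~ (utility w v < utility (deviate w v x) v).

Definition proportional_profile : profile :=
  fun v s => dstar * (Rw s / \sum_(s' : S) Rw s') * sigma v.

End Game.

From mathcomp Require Import all_boot all_order all_algebra.
From mathcomp Require Import ring.
Set Implicit Arguments. Unset Strict Implicit. Unset Printing Implicit Defensive.
Import Order.TTheory GRing.Theory Num.Theory.
Local Open Scope ring_scope.

(** A validator's payoff from service [s] is [x / (x + A) * R s], concave in
    its own allocation [x] ([A] is the stake of the others on [s]).  Hence it
    lies below its tangent at the current allocation, and a deviation gains at
    most [sum_s slope_s * (x s - w v s)].  Under the proportional profile the
    slope [R s * A / (w v s + A)^2] is the same for every service, so the gain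
    is a multiple of the change of total allocation, which cannot increase
    since the validator already uses its whole budget [d^* * sigma v]. *)

Lemma share_le_tangent (R : realFieldType) (r A w x : R) :
  0 <= r -> 0 <= A -> 0 < w -> 0 <= x ->
  x / (x + A) * r <= w / (w + A) * r + r * A / (w + A) ^+ 2 * (x - w).
Proof.
move=> r_ge0 A_ge0 w_gt0 x_ge0.
have wA_gt0 : 0 < w + A by rewrite ltr_wpDr.
rewrite -subr_ge0; have [->|x_neq0] := eqVneq x 0.
  have -> : w / (w + A) * r + r * A / (w + A) ^+ 2 * (0 - w) - 0 / (0 + A) * r
      = r * w ^+ 2 / (w + A) ^+ 2.
    by rewrite !mul0r subr0; field; rewrite lt0r_neq0.
  exact: divr_ge0 (mulr_ge0 r_ge0 (sqr_ge0 w)) (sqr_ge0 _).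
have xA_gt0 : 0 < x + A by rewrite ltr_wpDr // lt0r x_neq0.
have -> : w / (w + A) * r + r * A / (w + A) ^+ 2 * (x - w) - x / (x + A) * r
    = r * A * (x - w) ^+ 2 / ((x + A) * (w + A) ^+ 2).
  by field; rewrite !lt0r_neq0.
apply: divr_ge0; first exact: mulr_ge0 (mulr_ge0 r_ge0 A_ge0) (sqr_ge0 _).
exact: mulr_ge0 (ltW xA_gt0) (sqr_ge0 _).
Qed.

Section Deviations.
Variables (R : realFieldType) (V S : finType).
Variables (sigma : V -> R) (Rw : S -> R) (dstar : R).
Hypothesis sigma_gt0 : forall v, 0 < sigma v.
Hypothesis Rw_ge0 : forall s, 0 <= Rw s.

Lemma restaking_degree_le (w : V -> S -> R) v d :
  (restaking_degree sigma w v <= d) = (\sum_s w v s <= d * sigma v).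
Proof. by rewrite /restaking_degree ler_pdivrMr. Qed.

(* The special case [w v s == 0] of [utility] agrees with the general term. *)
Lemma utility_within_budget (w : V -> S -> R) v :
  restaking_degree sigma w v <= dstar ->
  utility sigma Rw dstar w v = \sum_s w v s / (\sum_v' w v' s) * Rw s.
Proof.
move=> budget; rewrite /utility budget; apply: eq_bigr => s _.
by case: eqP => // ->; rewrite !mul0r.
Qed.

Lemma deviate_self (w : V -> S -> R) v x s : deviate w v x v s = x s.
Proof. by rewrite /deviate eqxx. Qed.

Lemma sum_deviate (w : V -> S -> R) v x s :
  \sum_v' deviate w v x v' s = x s + \sum_(v' | v' != v) w v' s.
Proof.
rewrite (bigD1 v) //= deviate_self; congr (_ + _).
by apply: eq_bigr => v' /negbTE v'v; rewrite /deviate v'v.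
Qed.

Lemma utility_deviate_le (w : V -> S -> R) v (lam : R) :
  (forall v' s, 0 <= w v' s) -> (forall s, 0 < w v s) -> 0 <= lam ->
  restaking_degree sigma w v = dstar ->
  (forall s, Rw s * (\sum_(v' | v' != v) w v' s) / (\sum_v' w v' s) ^+ 2 = lam) ->
  forall x, feasible_row sigma v x ->
  utility sigma Rw dstar (deviate w v x) v <= utility sigma Rw dstar w v.
Proof.
move=> w_ge0 wv_gt0 lam_ge0 deg_w slope x x_feas.
have w_budget : restaking_degree sigma w v <= dstar by rewrite deg_w.
have [x_budget|x_over] := boolP
    (restaking_degree sigma (deviate w v x) v <= dstar); last first.
  rewrite {1}/utility (negbTE x_over) utility_within_budget //.
  by apply: sumr_ge0 => s _; rewrite !mulr_ge0 ?invr_ge0 ?sumr_ge0.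
have sum_wv : \sum_s w v s = dstar * sigma v.
  by rewrite -deg_w /restaking_degree divfK ?lt0r_neq0.
have sum_x : \sum_s x s <= dstar * sigma v.
  move: x_budget; rewrite restaking_degree_le.
  by under eq_bigr do rewrite deviate_self.
rewrite !utility_within_budget //.
under eq_bigr => s _ do rewrite deviate_self sum_deviate.
have tangent s : x s / (x s + \sum_(v' | v' != v) w v' s) * Rw s
    <= w v s / (\sum_v' w v' s) * Rw s + lam * (x s - w v s).
  have col_w : \sum_v' w v' s = w v s + \sum_(v' | v' != v) w v' s.
    by rewrite (bigD1 v).
  rewrite -(slope s) col_w; apply: share_le_tangent => //.
  - exact: sumr_ge0.
  - by case/andP: (x_feas s).
apply: le_trans (ler_sum _ (fun s _ => tangent s)) _.
rewrite big_split /= -mulr_sumr sumrB sum_wv gerDl.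
by rewrite mulr_ge0_le0 // subr_le0.
Qed.

End Deviations.

Section ProportionalProfile.
Variables (R : realFieldType) (V S : finType).
Variables (sigma : V -> R) (Rw : S -> R) (dstar : R).
Hypothesis sigma_gt0 : forall v, 0 < sigma v.
Hypothesis Rw_gt0 : forall s, 0 < Rw s.
Hypothesis dstar_gt0 : 0 < dstar.
Hypothesis sum_Rw_gt0 : 0 < \sum_s Rw s.

Local Notation w := (proportional_profile sigma Rw dstar).
Local Notation T := (\sum_s Rw s).
Local Notation Sg := (\sum_v sigma v).

Lemma proportional_profile_gt0 v s : 0 < w v s.
Proof. by rewrite !mulr_gt0 ?invr_gt0. Qed.

Lemma sum_proportional_profile s (A : pred V) :
  \sum_(v | A v) w v s = dstar * (Rw s / T) * \sum_(v | A v) sigma v.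
Proof. by rewrite mulr_sumr. Qed.

Lemma restaking_degree_proportional v : restaking_degree sigma w v = dstar.
Proof.
rewrite /restaking_degree -mulr_suml -mulr_sumr -mulr_suml.
by field; rewrite !lt0r_neq0.
Qed.

Lemma feasible_proportional :
  (forall s, dstar * (Rw s / T) <= 1) -> feasible sigma w.
Proof.
move=> cap v s; rewrite (ltW (proportional_profile_gt0 v s)) /=.
by rewrite ler_piMl ?cap // ltW.
Qed.

Lemma sigma_le_sum v : sigma v <= Sg.
Proof. by rewrite (bigD1 v) //= lerDl sumr_ge0 // => v' _; apply: ltW. Qed.

Lemma proportional_marginal v s :
  Rw s * (\sum_(v' | v' != v) w v' s) / (\sum_v' w v' s) ^+ 2
  = T * (Sg - sigma v) / (dstar * Sg ^+ 2).
Proof.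
have Sg_gt0 : 0 < Sg := lt_le_trans (sigma_gt0 v) (sigma_le_sum v).
have others : \sum_(v' | v' != v) sigma v' = Sg - sigma v.
  by rewrite [Sg](bigD1 v) //= addrAC subrr add0r.
rewrite (sum_proportional_profile s (fun v' => v' != v)).
rewrite (sum_proportional_profile s predT) others.
by field; rewrite !lt0r_neq0.
Qed.

End ProportionalProfile.

Theorem mainTheorem19 (R : realFieldType) (V S : finType)
  (sigma : V -> R) (Rw : S -> R) (dstar : R)
  (hV : (0 < #|V|)%N) (hS : (0 < #|S|)%N)
  (hsigma : forall v, 0 < sigma v)
  (hR : forall s, 0 < Rw s)
  (hd : 0 < dstar)
  (hcap : forall s, dstar * (Rw s / \sum_(s' : S) Rw s') <= 1) :
  nash_equilibrium sigma Rw dstar (proportional_profile sigma Rw dstar) /\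
  forall v, restaking_degree sigma (proportional_profile sigma Rw dstar) v = dstar.
Proof.
have sum_Rw_gt0 : 0 < \sum_s Rw s.
  have [s0 _] := card_gt0P hS.
  by rewrite (bigD1 s0) //= ltr_wpDr ?sumr_ge0 // => s _; apply: ltW.
split; last exact: restaking_degree_proportional.
split; first exact: feasible_proportional.
move=> v x x_feas; apply/negP; rewrite -leNgt.
apply: (utility_deviate_le hsigma (fun s => ltW (hR s)) _ _ _ _
          (proportional_marginal hsigma hR hd sum_Rw_gt0 v)) => //.
- by move=> v' s; apply/ltW/proportional_profile_gt0.
- exact: proportional_profile_gt0.
- apply: divr_ge0; last exact: mulr_ge0 (ltW hd) (sqr_ge0 _).
  by rewrite mulr_ge0 ?subr_ge0 ?sigma_le_sum // ltW.
- exact: restaking_degree_proportional.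
Qed.
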